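(* Let $r\ge1$ and let $P:\{0,1\}^r\to\{0,1\}$ be a predicate with an affine projection to AND. Then there is a constant $c_r>0$ such that for every $\varepsilon\in[0,1)$ and every $k\ge 4r+2$, there exists an instance of CSP$(P)$ on $k$ Boolean variables for which every $(1\pm\varepsilon)$-sparsifier uses at least $c_r k^2$ constraints.
   Context: A predicate $P:\{0,1\}^r\to\{0,1\}$ has an affine projection to AND if there exists $\pi:[r]\to\{0,1,x,\neg x,y,\neg y\}$ such that $\mathrm{AND}(x,y)=P(\pi(1),\dots,\pi(r))$ for all $x,y\in\{0,1\}$. An instance of CSP$(P)$ on Boolean variables $x_1,\dots,x_k$ is a list of constraints $C_j=P(x_{j,1},\dots,x_{j,r})$, $j\in[m]$; its value on $x\in\{0,1\}^k$ is $\sum_jC_j(x)$. A $(1\pm\varepsilon)$-sparsifier is a subset $T\subseteq[m]$ with nonnegative weights $(w_j)_{j\in T}$ such that for every $x\in\{0,1\}^k$, $(1-\varepsilon)\sum_{j=1}^mC_j(x)\le\sum_{j\in T}w_jC_j(x)\le(1+\varepsilon)\sum_{j=1}^mC_j(x)$. *)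

From mathcomp Require Import all_boot all_order all_algebra.
Set Implicit Arguments. Unset Strict Implicit. Unset Printing Implicit Defensive.
Import Order.TTheory GRing.Theory Num.Theory.
Local Open Scope ring_scope.

Definition pred_r (r : nat) := ('I_r -> bool) -> bool.

(* Targets of an affine projection: 0, 1, x, not x, y, not y. *)
Inductive aff_lit := L0 | L1 | LX | LNX | LY | LNY.

Definition eval_lit (l : aff_lit) (x y : bool) : bool :=
  match l with
  | L0 => false | L1 => true
  | LX => x | LNX => ~~ x
  | LY => y | LNY => ~~ y
  end.

Definition has_affine_proj_to_AND (r : nat) (P : pred_r r) : Prop :=
  exists pi : 'I_r -> aff_lit,
    forall x y : bool, (x && y) = P (fun i => eval_lit (pi i) x y).

(* An instance of CSP(P) on k variables with m constraints: the j-th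
   constraint is P(x_{S j 0}, ..., x_{S j (r-1)}). *)
Definition csp_instance (r k m : nat) := 'I_m -> 'I_r -> 'I_k.

Definition constr_val (r k m : nat) (P : pred_r r) (S : csp_instance r k m)
  (j : 'I_m) (x : 'I_k -> bool) : bool := P (fun i => x (S j i)).

(* (T, w) is a (1 +- eps)-sparsifier of the instance (weights outside T unused). *)
Definition is_sparsifier (R : realFieldType) (r k m : nat) (P : pred_r r)
  (S : csp_instance r k m) (eps : R) (T : {set 'I_m}) (w : 'I_m -> R) : Prop :=
  (forall j, j \in T -> 0 <= w j) /\
  forall x : 'I_k -> bool,
    let tot := \sum_(j < m) (constr_val P S j x)%:R in
    let sp := \sum_(j in T) w j * (constr_val P S j x)%:R in
    (1 - eps) * tot <= sp /\ sp <= (1 + eps) * tot.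

(** Reduce AND to P on a grid: with n := (k - 2) %/ 4, the k variables hold
    n "x" variables, their n negations, n "y" variables, their n negations
    and the two constants 0 and 1.  Feeding the affine projection with x_a
    and y_b gives, for every pair (a, b), a constraint computing x_a && y_b.
    The assignment x = e_a, y = e_b satisfies exactly one of these n^2
    constraints, so every sparsifier with eps < 1 must keep all of them,
    and n^2 >= k^2 / 81. *)
From mathcomp Require Import all_boot all_order all_algebra.
From mathcomp Require Import reals zify lra.
From Stdlib Require Import FunctionalExtensionality.
Set Implicit Arguments. Unset Strict Implicit. Unset Printing Implicit Defensive.
Import Order.TTheory GRing.Theory Num.Theory.
Local Open Scope ring_scope.

Lemma sparsifier_mem_of_unique_sat (R : realFieldType) (r k m : nat)
    (P : pred_r r) (S : csp_instance r k m) (eps : R) (T : {set 'I_m})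
    (w : 'I_m -> R) (x : 'I_k -> bool) (j0 : 'I_m) :
  eps < 1 -> is_sparsifier P S eps T w ->
  (forall j, constr_val P S j x = (j == j0)) -> j0 \in T.
Proof.
move=> eps_lt1 [_ sparse] sat_j0; apply/negPn/negP => j0_notin_T.
have [lower _] := sparse x; move: lower.
have -> : \sum_(j < m) (constr_val P S j x)%:R = 1 :> R.
  rewrite (bigD1 j0) //= sat_j0 eqxx big1 ?addr0 // => j /negbTE j_neq.
  by rewrite sat_j0 j_neq.
rewrite big1 => [|j j_in_T]; first lra.
rewrite sat_j0; have /negbTE -> : j != j0 by apply: contraNneq j0_notin_T => <-.
by rewrite mulr0.
Qed.

Definition lit_var (n : nat) (l : aff_lit) (a b : nat) : nat :=
  match l with
  | L0 => 4 * n | L1 => 4 * n + 1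
  | LX => a | LNX => n + a | LY => 2 * n + b | LNY => 3 * n + b
  end%N.

Definition point_assignment (n a0 b0 v : nat) : bool :=
  if (v < n)%N then v == a0
  else if (v < 2 * n)%N then (v - n)%N != a0
  else if (v < 3 * n)%N then (v - 2 * n)%N == b0
  else if (v < 4 * n)%N then (v - 3 * n)%N != b0
  else v != 4 * n.

Lemma lit_var_lt (n a b : nat) (l : aff_lit) :
  (a < n)%N -> (b < n)%N -> (lit_var n l a b < 4 * n + 2)%N.
Proof. by case: l => /=; lia. Qed.

Lemma point_assignment_lit_var (n a b : nat) (l : aff_lit) (a0 b0 : nat) :
  (a < n)%N -> (b < n)%N ->
  point_assignment n a0 b0 (lit_var n l a b) = eval_lit l (a == a0) (b == b0).
Proof.
move=> a_lt b_lt; rewrite /point_assignment; case: l => /=;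
  repeat (case: ifP => ?; try lia); by rewrite ?addKn ?eqxx //; lia.
Qed.

Section AndGrid.

(* The number of variables is written [k.+1] so that [inord] is available. *)
Variables (r k n : nat) (P : pred_r r) (pi : 'I_r -> aff_lit).
Hypothesis pi_AND : forall x y : bool, (x && y) = P (fun i => eval_lit (pi i) x y).
Hypothesis k_large : (4 * n + 2 <= k.+1)%N.

Definition and_grid : csp_instance r k.+1 (n * n) :=
  fun j i => inord (lit_var n (pi i) (j %/ n) (j %% n)).

Definition grid_point (j0 : 'I_(n * n)) (v : 'I_k.+1) : bool :=
  point_assignment n (j0 %/ n) (j0 %% n) v.

Lemma and_grid_sat (j j0 : 'I_(n * n)) :
  constr_val P and_grid j (grid_point j0) = (j == j0).
Proof.
have n_gt0 : (0 < n)%N by case: n j => [|//] [].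
have div_lt : (j %/ n < n)%N by rewrite ltn_divLR.
have mod_lt : (j %% n < n)%N by rewrite ltn_pmod.
rewrite /constr_val.
have -> : (fun i => grid_point j0 (and_grid j i)) =
    fun i => eval_lit (pi i) (j %/ n == j0 %/ n)%N (j %% n == j0 %% n)%N.
  apply: functional_extensionality => i.
  rewrite /grid_point /and_grid inordK ?point_assignment_lit_var //.
  by have := lit_var_lt (pi i) div_lt mod_lt; lia.
rewrite -pi_AND; apply/andP/eqP => [[/eqP div_eq /eqP mod_eq] | -> //].
by apply: val_inj; rewrite /= (divn_eq j n) (divn_eq j0 n) div_eq mod_eq.
Qed.

Lemma and_grid_sparsifier_card (R : realFieldType) (eps : R)
    (T : {set 'I_(n * n)}) (w : 'I_(n * n) -> R) :
  eps < 1 -> is_sparsifier P and_grid eps T w -> (n * n <= #|T|)%N.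
Proof.
move=> eps_lt1 sparse; rewrite -[X in (X <= _)%N]card_ord subset_leq_card //.
apply/subsetP => j0 _.
exact: sparsifier_mem_of_unique_sat eps_lt1 sparse (and_grid_sat^~ j0).
Qed.

End AndGrid.

Theorem lemma7p3 (R : realType) (r : nat) (hr : (1 <= r)%N) (P : pred_r r)
  (hP : has_affine_proj_to_AND P) :
  exists c : R, 0 < c /\
    forall (eps : R), 0 <= eps -> eps < 1 ->
    forall k : nat, (4 * r + 2 <= k)%N ->
    exists (m : nat) (S : csp_instance r k m),
      forall (T : {set 'I_m}) (w : 'I_m -> R),
        is_sparsifier P S eps T w -> c * (k ^ 2)%:R <= (#|T|)%:R.
Proof.
case: hP => pi pi_AND; exists 81%:R^-1; split; first by rewrite invr_gt0 ltr0n.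
move=> eps _ eps_lt1 [|k] k_ge; first by lia.
pose n := ((k.+1 - 2) %/ 4)%N.
have k_large : (4 * n + 2 <= k.+1)%N by rewrite /n; lia.
exists (n * n)%N, (@and_grid r k n pi) => T w sparse.
have card_T := and_grid_sparsifier_card pi_AND k_large eps_lt1 sparse.
have k_le : (k.+1 <= 9 * n)%N by rewrite /n; lia.
have k2_le : (k.+1 ^ 2 <= 81 * (n * n))%N by nia.
rewrite ler_pdivrMl ?ltr0n // -natrM ler_nat.
exact: leq_trans k2_le (leq_mul (leqnn 81) card_T).
Qed.
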